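(* Let $S\subseteq N$ be an $n$-switchable set and let $T_1,\dots,T_l$ be its equivalence classes for the relation of being connected in $S$. Then: (1) each $T_i$ is of the form $T_i=T_{i1}\times\cdots\times T_{in}$ for some subsets $T_{ij}\subseteq[r_j]$; (2) if $a\in T_i$, $b\in N$, $j\in[n]$ and ${\rm s}(j,a,b)\in S$, then ${\rm s}(j,a,b)\in T_i$; (3) if $i\neq j$ in $[l]$, there exist distinct $p_1,\dots,p_m\in[n]$ with $m\ge 3$ such that $T_{ip_k}\cap T_{jp_k}=\emptyset$ for all $k=1,\dots,m$.
   Context: Fix positive integers $n, r_1,\dots,r_n$ and let $N=[r_1]\times\cdots\times[r_n]$. For $a,b\in N$ and $i\in[n]$, ${\rm s}(i,a,b)\in N$ has $i$-th component $b_i$ and other components equal to those of $a$. Let $d(a,b)=\#\{j: a_j\neq b_j\}$. A subset $S\subseteq N$ is $n$-switchable if for all $a,b\in S$ with $d(a,b)=2$ and all $i\in[n]$, ${\rm s}(i,a,b)\in S$. Elements $a,b\in S$ are connected in $S$ if there are $a_0=a,\dots,a_k=b$ in $S$ with $d(a_{j-1},a_j)\le 1$ for all $j$. *)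

From mathcomp Require Import all_boot all_order.
Set Implicit Arguments. Unset Strict Implicit. Unset Printing Implicit Defensive.

(* Points are functions 'I_n -> nat; coordinate i ranges over
   [r_i] represented as {0, ..., r i - 1}. *)
Definition pt (n : nat) := {ffun 'I_n -> nat}.

Definition inN (n : nat) (r : 'I_n -> nat) (a : pt n) : bool :=
  [forall i, a i < r i].

Definition sw (n : nat) (i : 'I_n) (a b : pt n) : pt n :=
  [ffun j => if j == i then b j else a j].

Definition dist (n : nat) (a b : pt n) : nat := #|[pred j | a j != b j]|.

Definition switchable (n : nat) (S : pt n -> Prop) : Prop :=
  forall a b : pt n, S a -> S b -> dist a b = 2 -> forall i : 'I_n, S (sw i a b).

Definition connected_in (n : nat) (S : pt n -> Prop) (a b : pt n) : Prop :=
  exists p : seq (pt n),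
    [/\ S a, (forall x, x \in p -> S x),
        path (fun x y => dist x y <= 1) a p & last a p = b].

(* If a and b are connected in S, then every point whose coordinates are each
   taken from a or from b lies in S: walking along the path from a to b, a
   point at distance 2 from a known point of S is reached by a single switch.
   Hence each class is closed under replacing one coordinate by that of
   another member, which makes it the product of its coordinate projections.
   If two classes had intersecting projections in all but at most two
   coordinates, one could pick a member of each differing in at most two
   coordinates; one switch would then connect them. *)
From mathcomp Require Import all_boot all_order.
From Stdlib Require Import ClassicalEpsilon.
Set Implicit Arguments. Unset Strict Implicit. Unset Printing Implicit Defensive.

Section Hamming.
Variable n : nat.
Implicit Types x y u v : pt n.

Lemma distC x y : dist x y = dist y x.
Proof. by apply: eq_card => j; rewrite !inE eq_sym. Qed.

Lemma dist_eq0 x y : (dist x y == 0) = (x == y).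
Proof.
rewrite /dist; apply/eqP/eqP => [/card0_eq xy | ->]; last by apply: eq_card0 => j; rewrite !inE eqxx.
by apply/ffunP => j; move: (xy j); rewrite !inE => /negbFE/eqP.
Qed.

Lemma dist_gt0 x y : 0 < dist x y -> exists q, x q != y q.
Proof. by move=> /card_gt0P [q]; rewrite inE; exists q. Qed.

Lemma dist_sw x y (q : 'I_n) : dist x (sw q x y) <= 1.
Proof.
rewrite /dist -(card1 q); apply: subset_leq_card; apply/subsetP => k.
by rewrite !inE ffunE; case: (k =P q) => // _; rewrite eqxx.
Qed.

Lemma dist_swS x y (q : 'I_n) : x q != y q -> (dist (sw q x y) y).+1 = dist x y.
Proof.
move=> xyq; rewrite /dist [RHS](cardD1 q) inE xyq add1n; congr _.+1.
by apply: eq_card => j; rewrite !inE ffunE; case: (j =P q) => [->|]; rewrite ?eqxx.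
Qed.

Lemma dist_le1_eq x y q : dist x y <= 1 -> x q != y q -> forall j, j != q -> x j = y j.
Proof.
move=> le1 xyq j jq; apply/eqP; apply: contraTT le1 => xyj.
rewrite -ltnNge; have <- : #|[set j; q]| = 2 by rewrite cards2 jq.
apply: subset_leq_card; apply/subsetP => k.
by rewrite !inE => /orP[] /eqP ->.
Qed.

Lemma dist_leS x y u v q :
  (forall j, u j != v j -> j = q \/ x j != y j) -> dist u v <= (dist x y).+1.
Proof.
move=> uv; rewrite /dist -add1n -(card1 q).
apply: leq_trans (subset_leq_card (B := [predU pred1 q & [pred j | x j != y j]]) _) _.
  by apply/subsetP => k; rewrite !inE => /uv [->|->]; rewrite ?eqxx ?orbT.
by rewrite -cardUI leq_addr.
Qed.

Lemma sw_id x y q : x q = y q -> sw q x y = x.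
Proof. by move=> xyq; apply/ffunP => j; rewrite ffunE; case: (j =P q) => [->|]. Qed.

Lemma sw_eqr x y q : (forall j, j != q -> x j = y j) -> sw q x y = y.
Proof. by move=> xy; apply/ffunP => j; rewrite ffunE; case: eqP => // /eqP /xy. Qed.

Definition mixture x y z := forall j, z j = x j \/ z j = y j.

End Hamming.

Section Switchable.
Variables (n : nat) (S : pt n -> Prop).
Hypothesis swS : switchable S.
Implicit Types a x y z u v : pt n.

Notation conn := (connected_in S).

Lemma switchable_sw u v q : S u -> S v -> dist u v <= 2 -> S (sw q u v).
Proof.
move=> Su Sv; rewrite leq_eqVlt => /orP[/eqP d2 | d1]; first exact: swS.
have [uvq | uvq] := eqVneq (u q) (v q); first by rewrite sw_id.
by rewrite sw_eqr //; apply: dist_le1_eq.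
Qed.

Definition mix_closed x y := forall z, mixture x y z -> S z.

Lemma mix_closed_cons x a y : S x -> dist x a <= 1 -> mix_closed a y -> mix_closed x y.
Proof.
move=> Sx xa ay; suff mixS k z : dist z x <= k -> mixture x y z -> S z.
  by move=> z; apply: mixS (leqnn _).
elim: k z => [|k IH] z zx zxy; first by move: zx; rewrite leqn0 dist_eq0 => /eqP ->.
have [/eqP | /dist_gt0 [q zxq]] := posnP (dist z x); first by rewrite dist_eq0 => /eqP ->.
have zyq : z q = y q by case: (zxy q) => // zq; rewrite zq eqxx in zxq.
(* z = sw q v u: v is one step closer to x, u mixes a and y, and v, u differ
   only at q and where x and a differ. *)
pose v := sw q z x.
pose u : pt n := [ffun j => if z j == x j then a j else y j].
have Sv : S v.
  apply: IH; first by rewrite -ltnS dist_swS.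
  by move=> j; rewrite ffunE; case: (j == q); [left | apply: zxy].
have Su : S u by apply: ay => j; rewrite ffunE; case: (z j == x j); [left | right].
have -> : z = sw q v u.
  apply/ffunP => j; rewrite /v /u !ffunE; case: (j =P q) => [-> | //].
  by rewrite (negbTE zxq).
apply: switchable_sw => //.
apply: leq_trans (dist_leS (x := x) (y := a) (q := q) _) _ => [j|]; last by rewrite ltnS.
rewrite /v /u !ffunE.
case: (j =P q) => [-> _ | _]; first by left.
case: (z j =P x j) => [-> | zxj]; first by right.
by case: (zxy j) => zj; [case: zxj | rewrite zj eqxx].
Qed.

Lemma connected_in_S x y : conn x y -> S x /\ S y.
Proof.
case=> p [Sx Sp _ <-]; split => //.
by move: (mem_last x p); rewrite inE => /orP[/eqP -> | /Sp].
Qed.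

Lemma connected_in_refl x : S x -> conn x x.
Proof. by move=> Sx; exists [::]. Qed.

Lemma connected_in_rcons x y z : conn x y -> S z -> dist y z <= 1 -> conn x z.
Proof.
case=> p [Sx Sp xp <-] Sz yz; exists (rcons p z); split => //.
- by move=> t; rewrite mem_rcons inE => /orP[/eqP -> | /Sp].
- by rewrite rcons_path xp.
- by rewrite last_rcons.
Qed.

Lemma connected_in_cons x c y : S x -> dist x c <= 1 -> conn c y -> conn x y.
Proof.
move=> Sx xc [p [Sc Sp cp <-]]; exists (c :: p); split => //=; last by rewrite xc.
by move=> t; rewrite inE => /orP[/eqP -> | /Sp].
Qed.

Lemma connected_in_ind (P : pt n -> pt n -> Prop) :
  (forall x, S x -> P x x) ->
  (forall x c y, S x -> dist x c <= 1 -> conn c y -> P c y -> P x y) ->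
  forall x y, conn x y -> P x y.
Proof.
move=> Prefl Pcons x _ [p [Sx Sp xp <-]].
elim: p x Sx Sp xp => [|c p IH] x Sx Sp /=; first by move=> _; apply: Prefl.
case/andP=> xc cp; have Sc : S c by apply: Sp; rewrite inE eqxx.
have Sp' t : t \in p -> S t by move=> tp; apply: Sp; rewrite inE tp orbT.
by apply: Pcons xc _ (IH c Sc Sp' cp) => //; exists p.
Qed.

Lemma connected_in_sym x y : conn x y -> conn y x.
Proof.
move: x y; apply: (connected_in_ind (P := fun x y => conn y x)).
  exact: connected_in_refl.
by move=> x c y Sx xc _ yc; apply: connected_in_rcons yc Sx _; rewrite distC.
Qed.

Lemma connected_in_trans x y z : conn x y -> conn y z -> conn x z.
Proof.
move: x y; apply: (connected_in_ind (P := fun x y => conn y z -> conn x z)) => //.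
by move=> x c y Sx xc _ IH /IH; apply: connected_in_cons.
Qed.

Lemma connected_in_mix_closed x y : conn x y -> mix_closed x y.
Proof.
move: x y; apply: connected_in_ind => [x Sx z zx | x c y Sx xc _]; last exact: mix_closed_cons.
by have -> : z = x by apply/ffunP => j; case: (zx j).
Qed.

Lemma connected_in_sw a0 w y q : conn a0 w -> conn a0 y -> conn a0 (sw q w y).
Proof.
move=> a0w a0y; have wy := connected_in_trans (connected_in_sym a0w) a0y.
apply: connected_in_rcons a0w _ (dist_sw _ _ _); apply: (connected_in_mix_closed wy).
by move=> j; rewrite ffunE; case: (j == q); [right | left].
Qed.

Lemma connected_in_dist_le2 x y : S x -> S y -> dist x y <= 2 -> conn x y.
Proof.
move=> Sx Sy; have [/eqP | /dist_gt0 [q xyq] xy] := posnP (dist x y).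
  by rewrite dist_eq0 => /eqP -> _; apply: connected_in_refl.
have Sz : S (sw q x y) by apply: switchable_sw.
apply: connected_in_rcons (connected_in_rcons (connected_in_refl Sx) Sz (dist_sw _ _ _)) Sy _.
by rewrite -ltnS dist_swS.
Qed.

End Switchable.

Lemma sw_closed_product n (P : pt n -> Prop) (a0 x : pt n) :
  (forall w y q, P w -> P y -> P (sw q w y)) -> P a0 ->
  (forall j, exists2 y, P y & y j = x j) -> P x.
Proof.
move=> Psw Pa0 Px.
suff Pprefix k : k <= n -> P [ffun j : 'I_n => if j < k then x j else a0 j].
  by have := Pprefix n (leqnn n); congr P; apply/ffunP => j; rewrite ffunE ltn_ord.
elim: k => [_ | k IH lt_k_n].
  by congr P: Pa0; apply/ffunP => j; rewrite ffunE.
have [y Py yx] := Px (Ordinal lt_k_n).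
congr P: (Psw _ _ (Ordinal lt_k_n) (IH (ltnW lt_k_n)) Py).
apply/ffunP => j; rewrite !ffunE; case: (j =P Ordinal lt_k_n) => [-> | /eqP jk].
  by rewrite /= ltnSn yx.
by move: jk; rewrite ltnS [j <= k]leq_eqVlt -(inj_eq val_inj) /= => /negbTE ->.
Qed.

Section Classes.
Variables (n : nat) (S : pt n -> Prop).
Hypothesis swS : switchable S.

Definition coord_of a0 (j : 'I_n) (v : nat) := exists2 x, connected_in S a0 x & x j = v.

Lemma connected_in_coords a0 x :
  S a0 -> connected_in S a0 x <-> forall j, coord_of a0 j (x j).
Proof.
move=> Sa0; split => [a0x j | ]; first by exists x.
apply: sw_closed_product (connected_in_refl Sa0) => w y q; exact: connected_in_sw.
Qed.

Definition coords_meet a0 b0 (p : 'I_n) := exists v, coord_of a0 p v /\ coord_of b0 p v.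

Lemma connected_in_coords_meet a0 b0 (P : {set 'I_n}) :
  S a0 -> S b0 -> #|P| <= 2 -> (forall p, p \notin P -> coords_meet a0 b0 p) ->
  connected_in S a0 b0.
Proof.
move=> Sa0 Sb0 le2 meet.
have meet_pairs p : exists uv : nat * nat,
    [/\ coord_of a0 p uv.1, coord_of b0 p uv.2 & p \notin P -> uv.1 = uv.2].
  case: (boolP (p \in P)) => pP; last by have [v [av bv]] := meet p pP; exists (v, v).
  exists (a0 p, b0 p); split => //; [exists a0 | exists b0] => //; exact: connected_in_refl.
have [f f_coords] := fin_all_exists meet_pairs.
pose x : pt n := [ffun p => (f p).1]; pose y : pt n := [ffun p => (f p).2].
have a0x : connected_in S a0 x.
  by apply/connected_in_coords => // p; rewrite ffunE; case: (f_coords p).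
have b0y : connected_in S b0 y.
  by apply/connected_in_coords => // p; rewrite ffunE; case: (f_coords p).
have xy : connected_in S x y.
  apply: (connected_in_dist_le2 swS).
  - exact: (connected_in_S a0x).2.
  - exact: (connected_in_S b0y).2.
  apply: leq_trans le2; apply: subset_leq_card; apply/subsetP => p; rewrite !inE !ffunE.
  by case: (f_coords p) => _ _ fP; apply: contraR => /fP ->.
exact: connected_in_trans a0x (connected_in_trans xy (connected_in_sym b0y)).
Qed.

End Classes.

Theorem theorem5p1 (n : nat) (r : 'I_n -> nat) (S : pt n -> Prop) :
  0 < n -> (forall i, 0 < r i) ->
  (forall a, S a -> inN r a) ->
  switchable S ->
  (* (1) the class of a0 is a product of subsets T_j of [r_j] *)
  (forall a0, S a0 ->
     exists T : 'I_n -> pred nat,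
       (forall j x, T j x -> x < r j) /\
       (forall x : pt n, connected_in S a0 x <-> (forall j, T j (x j)))) /\
  (* (2) closure of classes under switches staying in S *)
  (forall a0 a b (j : 'I_n), S a0 -> connected_in S a0 a -> inN r b ->
     S (sw j a b) -> connected_in S a0 (sw j a b)) /\
  (* (3) two distinct classes have disjoint factors in >= 3 coordinates *)
  (forall a0 b0, S a0 -> S b0 -> ~ connected_in S a0 b0 ->
     exists P : {set 'I_n}, 3 <= #|P| /\
       forall p, p \in P -> forall x y : pt n,
         connected_in S a0 x -> connected_in S b0 y -> x p <> y p).
Proof.
move=> _ _ SN swS; split; [|split].
- move=> a0 Sa0; exists (fun j v => excluded_middle_informative (coord_of S a0 j v)).
  split=> [j v /sumboolP [x a0x <-] | x].
    by have [_ /SN /forallP] := connected_in_S a0x.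
  split=> [a0x j | xT]; first by apply/sumboolP; apply: (connected_in_coords swS x Sa0).1.
  by apply/(connected_in_coords swS x Sa0) => j; apply/sumboolP.
- move=> a0 a b j _ a0a _ Ssw; exact: connected_in_rcons a0a Ssw (dist_sw _ _ _).
- move=> a0 b0 Sa0 Sb0 a0b0.
  exists [set p | ~~ excluded_middle_informative (coords_meet S a0 b0 p)]; split=> [| p].
    rewrite leqNgt ltnS; apply/negP => le2; apply: a0b0.
    by apply: connected_in_coords_meet le2 _ => // p; rewrite inE negbK => /sumboolP.
  rewrite inE => /sumboolP nmeet x y a0x b0y xy; apply: nmeet.
  by exists (x p); split; [exists x | exists y].
Qed.
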